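(* Let $A$ and $\Lambda$ be as in the context. Then every eigenvalue $\lambda$ of the $(n+1)\times(n+1)$ matrix $\Lambda A^T A$ is real and satisfies $0 \le \lambda \le 1$.
   Context: Let $n \le m$ be nonnegative integers. Let $B_0,\dots,B_n$ be real-valued basis functions (e.g. B-spline basis functions, tensor-product B-spline basis functions, or T-spline blending functions) that are nonnegative and form a partition of unity, i.e. $B_i(\mathbf t)\ge 0$ and $\sum_{i=0}^n B_i(\mathbf t)=1$ for every parameter $\mathbf t$. Let $\mathbf t_0,\dots,\mathbf t_m$ be parameter values assigned to data points, and assume that for every $i$ there is some $j$ with $B_i(\mathbf t_j)\neq 0$. Let $A$ be the $(m+1)\times(n+1)$ matrix with entries $A_{ji}=B_i(\mathbf t_j)$ ($j=0,\dots,m$, $i=0,\dots,n$). Let $\Lambda=\mathrm{diag}\big(1/\sum_{j=0}^m B_0(\mathbf t_j),\dots,1/\sum_{j=0}^m B_n(\mathbf t_j)\big)$, a diagonal matrix with positive diagonal entries. *)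

From HB Require Import structures.
From mathcomp Require Import all_boot all_order all_algebra.
Set Implicit Arguments. Unset Strict Implicit. Unset Printing Implicit Defensive.
Import Order.TTheory GRing.Theory Num.Theory.
Local Open Scope ring_scope.

Definition collocation (C : numClosedFieldType) (T : Type) (n m : nat)
  (B : 'I_n.+1 -> T -> C) (t : 'I_m.+1 -> T) : 'M[C]_(m.+1, n.+1) :=
  \matrix_(j < m.+1, i < n.+1) B i (t j).

Definition Lambda_mx (C : numClosedFieldType) (T : Type) (n m : nat)
  (B : 'I_n.+1 -> T -> C) (t : 'I_m.+1 -> T) : 'M[C]_n.+1 :=
  diag_mx (\row_(i < n.+1) (\sum_(j < m.+1) B i (t j))^-1).

From HB Require Import structures.
From mathcomp Require Import all_boot all_order all_algebra.
From mathcomp Require Import ring.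
Import Order.TTheory GRing.Theory Num.Theory.
Local Open Scope ring_scope.

(* Let v be a left eigenvector of Lambda A^T A, w := v Lambda and u := w A^T,
   and let s_i be the column sums of A, so that v_i = s_i w_i.  As A is real,
   sum_j |u_j|^2 = (u A) w^* = lambda * sum_i s_i |w_i|^2, with the last sum
   positive.  The rows of A are convex weights, so convexity of |.|^2 gives
   |u_j|^2 <= sum_i A_ji |w_i|^2; summing over j, sum_j |u_j|^2 is at most
   sum_i s_i |w_i|^2.  Hence lambda is a ratio of two such sums, in [0, 1]. *)

Lemma sqr_norm_convex_le (C : numClosedFieldType) (I : finType) (a w : I -> C) :
  (forall i, 0 <= a i) -> \sum_i a i = 1 ->
  `|\sum_i a i * w i| ^+ 2 <= \sum_i a i * `|w i| ^+ 2.
Proof.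
move=> a_ge0 a_sum1; set u := \sum_i a i * w i.
have conj_u : u^* = \sum_i a i * (w i)^*.
  rewrite rmorph_sum; apply: eq_bigr => i _.
  by rewrite rmorphM /= (conj_Creal (ger0_real (a_ge0 i))).
have def_u : \sum_i a i * w i = u by [].
clearbody u.
have variance : \sum_i a i * `|w i - u| ^+ 2 =
                \sum_i a i * `|w i| ^+ 2 - `|u| ^+ 2.
  transitivity (\sum_i a i * `|w i| ^+ 2 - (\sum_i a i * w i) * u^*
                - u * (\sum_i a i * (w i)^*) + (\sum_i a i) * (u * u^*)).
    rewrite mulr_suml mulr_sumr mulr_suml -!sumrB -big_split /=.
    by apply: eq_bigr => i _; rewrite !normCK rmorphB /=; ring.
  by rewrite def_u -conj_u a_sum1 mul1r normCK; ring.
rewrite -subr_ge0 -variance.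
by apply: sumr_ge0 => i _; rewrite mulr_ge0 ?exprn_ge0.
Qed.

Section ColumnNormalizedGram.

Variables (C : numClosedFieldType) (m n : nat) (A : 'M[C]_(m, n)).
Hypothesis A_ge0 : forall j i, 0 <= A j i.

Lemma sqr_norm_mulmx_tr (w : 'rV_n) :
  \sum_j `|(w *m A^T) 0 j| ^+ 2 = \sum_i (w *m A^T *m A) 0 i * (w 0 i)^*.
Proof.
under eq_bigr do rewrite normCK.
under [RHS]eq_bigr do rewrite mxE mulr_suml.
rewrite exchange_big /=; apply: eq_bigr => j _.
rewrite -(eq_bigr _ (fun i _ => mulrA _ _ _)) -mulr_sumr.
congr (_ * _); rewrite mxE rmorph_sum; apply: eq_bigr => i _.
by rewrite !mxE rmorphM /= (conj_Creal (ger0_real (A_ge0 j i))) mulrC.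
Qed.

Hypothesis A_rowsum1 : forall j, \sum_i A j i = 1.

Lemma sqr_norm_mulmx_tr_le (w : 'rV_n) :
  \sum_j `|(w *m A^T) 0 j| ^+ 2 <= \sum_i (\sum_j A j i) * `|w 0 i| ^+ 2.
Proof.
under [leRHS]eq_bigr do rewrite mulr_suml.
rewrite exchange_big /=; apply: ler_sum => j _.
have -> : (w *m A^T) 0 j = \sum_i A j i * w 0 i.
  by rewrite mxE; apply: eq_bigr => i _; rewrite mxE mulrC.
exact: sqr_norm_convex_le.
Qed.

Hypothesis A_colsum_neq0 : forall i, \sum_j A j i != 0.

Theorem eigenvalue_colsum_normalized_gram lambda :
  eigenvalue (diag_mx (\row_i (\sum_j A j i)^-1) *m A^T *m A) lambda ->
  lambda \is Num.real /\ 0 <= lambda <= 1.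
Proof.
move=> /eigenvalueP [v eig_v v_neq0].
pose s i := \sum_j A j i.
have s_gt0 i : 0 < s i by rewrite lt_def A_colsum_neq0 sumr_ge0.
pose w := v *m diag_mx (\row_i (s i)^-1).
have v_w i : v 0 i = s i * w 0 i.
  by rewrite /w mul_mx_diag !mxE mulrC mulfVK ?lt0r_neq0.
have gram_w : w *m A^T *m A = lambda *: v by rewrite -eig_v /w !mulmxA.
pose P := \sum_j `|(w *m A^T) 0 j| ^+ 2.
pose Q := \sum_i s i * `|w 0 i| ^+ 2.
have energy : P = lambda * Q.
  rewrite /P sqr_norm_mulmx_tr gram_w mulr_sumr; apply: eq_bigr => i _.
  by rewrite mxE v_w normCK; ring.
have Q_gt0 : 0 < Q.
  have /rV0Pn[k v_k] := v_neq0.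
  have w_k : w 0 k != 0 by apply: contraNneq v_k; rewrite v_w => ->; rewrite mulr0.
  rewrite /Q (bigD1 k) //= ltr_pwDl ?sumr_ge0 // => [|i _].
    by rewrite mulr_gt0 // exprn_gt0 // normr_gt0.
  by apply: mulr_ge0; [exact: ltW | exact: exprn_ge0].
have lambda_PQ : lambda = P / Q by rewrite energy mulfK ?gt_eqF.
have P_ge0 : 0 <= P by apply: sumr_ge0 => j _; rewrite exprn_ge0.
have lambda_ge0 : 0 <= lambda by rewrite lambda_PQ divr_ge0 // ltW.
split; first exact: ger0_real.
by rewrite lambda_ge0 lambda_PQ ler_pdivrMr // mul1r; apply: sqr_norm_mulmx_tr_le.
Qed.

End ColumnNormalizedGram.

Theorem lemma1 (C : numClosedFieldType) (T : Type) (n m : nat)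
  (B : 'I_n.+1 -> T -> C) (t : 'I_m.+1 -> T)
  (hnm : (n <= m)%N)
  (hreal : forall i x, B i x \is Num.real)
  (hnonneg : forall i x, 0 <= B i x)
  (hpu : forall x, \sum_(i < n.+1) B i x = 1)
  (hsupp : forall i, exists j, B i (t j) != 0)
  (lambda : C) :
  eigenvalue (Lambda_mx B t *m (collocation B t)^T *m collocation B t) lambda ->
  lambda \is Num.real /\ 0 <= lambda <= 1.
Proof.
have colsum i : \sum_j collocation B t j i = \sum_j B i (t j).
  by apply: eq_bigr => j _; rewrite mxE.
have -> : Lambda_mx B t =
          diag_mx (\row_i (\sum_j collocation B t j i)^-1).
  by congr diag_mx; apply/rowP => i; rewrite !mxE colsum.
apply: eigenvalue_colsum_normalized_gram => [j i|j|i].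
- by rewrite mxE.
- by rewrite -(hpu (t j)); apply: eq_bigr => i _; rewrite mxE.
have [j B_ij] := hsupp i.
rewrite colsum; apply: contraNneq B_ij.
by move=> /(psumr_eq0P (fun k _ => hnonneg i (t k))) ->.
Qed.
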